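(* Let $n\ge3$, let $F(x,y)\in\mathbb{Z}[x,y]$ be a binary form of degree $n$ irreducible over $\mathbb{Q}$ with $s+1$ nonzero coefficients and discriminant $D$, and let $h,\kappa,Y_S$ be as in the context. Write $F(x,y)=a\prod_{i=1}^n(x-\alpha_iy)$ and $L_i(x,y)=x-\alpha_i y$. Then for each $i=1,\dots,n$, among the primitive solutions $(x,y)$ of $1\le|F(x,y)|\le h$ with $0<y\le Y_S$ there is at most one with $|L_i(x,y)|<\frac{1}{2Y_S}$.
   Context: $R=n^{800\log^2 n}$; $h$ is a positive integer and $\kappa>1$ an integer with $h\le |D|^{\frac{1}{2(n-1)(2+1/\kappa)}}/\big((3R)^{n/2}(ns)^{2s+n}\big)$; $Y_S=e^6 s(ns)^{2s/n}h^{1/(\kappa n)}$. Here $a$ is the coefficient of $x^n$ and $\alpha_1,\dots,\alpha_n$ are the roots of $F(x,1)$. A primitive solution is a solution $(x,y)\in\mathbb{Z}^2$ with $\gcd(x,y)=1$. *)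

From HB Require Import structures.
From mathcomp Require Import all_boot all_order all_algebra.
From mathcomp Require Import all_classical all_reals all_analysis.
From mathcomp Require Import complex.
Set Implicit Arguments. Unset Strict Implicit. Unset Printing Implicit Defensive.
Import Order.TTheory GRing.Theory Num.Theory.
Local Open Scope ring_scope.

Definition bform (K : pzRingType) (n : nat) (c : 'I_n.+1 -> K) (x y : K) : K :=
  \sum_(k < n.+1) c k * x ^+ k * y ^+ (n - k).

Definition bformZ (K : pzRingType) (n : nat) (c : 'I_n.+1 -> int) (x y : K) : K :=
  bform (fun k => (c k)%:~R) x y.

Definition bform_irreducible (n : nat) (c : 'I_n.+1 -> int) : Prop :=
  (exists k, c k != 0) /\
  ~ (exists (d e : nat) (g : 'I_d.+1 -> rat) (h : 'I_e.+1 -> rat),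
        [/\ (0 < d)%N, (0 < e)%N, (d + e)%N = n &
            forall x y : rat, bformZ c x y = bform g x y * bform h x y]).

Definition nb_nonzero_coefs (n : nat) (c : 'I_n.+1 -> int) : nat :=
  #|[set k | c k != 0]|.

Definition R_const (R : realType) (n : nat) : R :=
  (n%:R : R) `^ (800 * ln (n%:R : R) ^+ 2).

Definition Y_S (R : realType) (n s h kappa : nat) : R :=
  expR 6 * s%:R * ((n * s)%:R `^ ((2 * s)%:R / n%:R))
    * (h%:R `^ (1 / (kappa * n)%:R)).

From HB Require Import structures.
From mathcomp Require Import all_boot all_order all_algebra.
From mathcomp Require Import all_classical all_reals all_analysis.
From mathcomp Require Import complex.
From mathcomp Require Import ring.
Import Order.TTheory GRing.Theory Num.Theory.
Local Open Scope ring_scope.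

(** If [(x1, y1)] and [(x2, y2)] both lie within [1/(2Y)] of the line
    [x = alpha y] with [0 < y <= Y], then the integer [x1 y2 - x2 y1] is a
    combination of the two small quantities [x_k - alpha y_k] with
    coefficients at most [Y], so it has absolute value [< 1] and vanishes.
    Coprimality and [y > 0] then force the two points to coincide. *)

Lemma det_as_linear_forms (K : comPzRingType) (a : K) (x1 y1 x2 y2 : int) :
  ((x1 * y2 - x2 * y1)%:~R : K) =
  y2%:~R * (x1%:~R - a * y1%:~R) - y1%:~R * (x2%:~R - a * y2%:~R).
Proof. by rewrite rmorphB !rmorphM /=; ring. Qed.

Lemma ler_normM_lt_half (K : numFieldType) (y Y e : K) :
  0 <= y -> y <= Y -> `|e| < 1 / (2 * Y) -> `|y * e| < 1 / 2.
Proof.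
move=> y_ge0 yY e_lt.
have Y_gt0 : 0 < Y.
  have : 0 < 1 / (2 * Y) by apply: le_lt_trans e_lt.
  by rewrite div1r invr_gt0 pmulr_rgt0.
rewrite normrM (ger0_norm y_ge0).
apply: (le_lt_trans (ler_wpM2r (normr_ge0 e) yY)).
by rewrite -ltr_pdivlMl // div1r -invfM mulrC -div1r.
Qed.

Lemma intr_normr_lt1 (K : numDomainType) (z : int) :
  `|(z%:~R : K)| < 1 -> z = 0.
Proof. by rewrite -intr_norm ltrz1 -[1]add0r ltzD1 normr_le0 => /eqP. Qed.

Lemma det_eq0_of_close (K : numFieldType) (a Y : K) (x1 y1 x2 y2 : int) :
  0 < y1 -> (y1%:~R : K) <= Y -> `|x1%:~R - a * y1%:~R| < 1 / (2 * Y) ->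
  0 < y2 -> (y2%:~R : K) <= Y -> `|x2%:~R - a * y2%:~R| < 1 / (2 * Y) ->
  x1 * y2 = x2 * y1.
Proof.
move=> y1_gt0 y1Y e1 y2_gt0 y2Y e2.
apply/eqP; rewrite -subr_eq0; apply/eqP/(@intr_normr_lt1 K).
rewrite (det_as_linear_forms _ a); apply: le_lt_trans (ler_normB _ _) _.
have half (y : int) (e : K) : 0 < y -> (y%:~R : K) <= Y -> `|e| < 1 / (2 * Y) ->
    `|y%:~R * e| < 1 / 2.
  by move=> y_gt0; apply: ler_normM_lt_half; rewrite ler0z ltW.
by rewrite [ltRHS]splitr ltrD ?half.
Qed.

Lemma coprimez_proportional_eq (x1 y1 x2 y2 : int) :
  coprimez x1 y1 -> coprimez x2 y2 -> 0 < y1 -> 0 < y2 ->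
  x1 * y2 = x2 * y1 -> (x1, y1) = (x2, y2).
Proof.
rewrite coprimez_sym => co1; rewrite coprimez_sym => co2 y1_gt0 y2_gt0 eq12.
have y1_dvd : (y1 %| y2)%Z by rewrite -(Gauss_dvdzr _ co1) eq12 dvdz_mull.
have y2_dvd : (y2 %| y1)%Z by rewrite -(Gauss_dvdzr _ co2) -eq12 dvdz_mull.
have ey : y1 = y2.
  rewrite -(gtr0_norm y1_gt0) -(gtr0_norm y2_gt0) -!abszE; congr Posz; apply/eqP.
  by rewrite eqn_dvd -!dvdzE y1_dvd y2_dvd.
by subst y2; rewrite (mulIf (lt0r_neq0 y1_gt0) eq12).
Qed.

Theorem lemma4p2 (R : realType) (n : nat) (c : 'I_n.+1 -> int)
    (s h kappa : nat) (D : int) (alpha : 'I_n -> R[i]) :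
  (3 <= n)%N ->
  bform_irreducible c ->
  nb_nonzero_coefs c = s.+1 ->
  (* F(x,y) = a * prod_i (x - alpha_i y), a = coefficient of x^n *)
  (forall x y : R[i],
      bformZ c x y = (c ord_max)%:~R * \prod_(i < n) (x - alpha i * y)) ->
  (* D is the discriminant of F *)
  D%:~R = (c ord_max)%:~R ^+ (2 * n - 2)
          * \prod_(i < n) \prod_(j < n | (i < j)%N) (alpha i - alpha j) ^+ 2 ->
  (0 < h)%N ->
  (1 < kappa)%N ->
  (h%:R : R) <= ((`|D|%:~R : R) `^ (1 / (2 * (n%:R - 1) * (2 + 1 / kappa%:R))))
                / ((3 * R_const R n) `^ (n%:R / 2) * ((n * s)%:R ^+ (2 * s + n))) ->
  forall i : 'I_n, forall x1 y1 x2 y2 : int,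
    let P (x y : int) :=
      [/\ coprimez x y,
          1 <= `|bformZ c x y| <= h%:Z,
          0 < y,
          (y%:~R : R) <= Y_S R n s h kappa &
          `|x%:~R - alpha i * y%:~R| < ((1 / (2 * Y_S R n s h kappa))%:C)%C] in
    P x1 y1 -> P x2 y2 -> (x1, y1) = (x2, y2).
Proof.
move=> _ _ _ _ _ _ _ _ i x1 y1 x2 y2 P.
set Y := Y_S R n s h kappa.
have embed (x y : int) : P x y ->
    [/\ coprimez x y, 0 < y, (y%:~R : R[i]) <= Y%:C%C &
        `|x%:~R - alpha i * y%:~R| < 1 / (2 * Y%:C%C)].
  move=> [co _ y_gt0 yY]; rewrite fmorph_div rmorph1 rmorphM rmorph_nat => close.
  by split=> //; rewrite -[y%:~R](rmorph_int (real_complex R)) lecR.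
move=> /embed [co1 y1_gt0 y1Y e1] /embed [co2 y2_gt0 y2Y e2].
apply: coprimez_proportional_eq => //.
exact: det_eq0_of_close y1_gt0 y1Y e1 y2_gt0 y2Y e2.
Qed.
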